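(* Let $P\subseteq\mathbb{R}^n$ be an $n$-dimensional rational polytope and let $\pi_P:\mathbb{R}^n\to\mathbb{R}^n/K(P)$ be its natural projection. Then $Q:=\pi_P(P)$ is a rational polytope (with respect to the lattice $\mathbb{Z}^n/(K(P)\cap\mathbb{Z}^n)$) satisfying $\mu(Q)\ge\mu(P)$. Moreover, if $\mu(Q)=\mu(P)$, then $\mathrm{core}(Q)$ is the point $\pi_P(\mathrm{core}(P))$.
   Context: For a full-dimensional rational polytope $R$ in a real vector space with lattice $\Lambda$, write $R$ irredundantly as $\{x:\langle a_i,x\rangle\ge b_i\}$ with $a_i$ primitive in the dual lattice $\Lambda^*$, $b_i\in\mathbb{Q}$, each inequality defining a facet; set $d_R(x):=\min_i(\langle a_i,x\rangle-b_i)$, $R^{(s)}:=\{x:d_R(x)\ge s\}$, $\mu(R):=(\sup\{s>0:R^{(s)}\neq\emptyset\})^{-1}$ ($\mathbb{Q}$-codegree), $\mathrm{core}(R):=R^{(1/\mu(R))}$. For $P$ (with lattice $\mathbb{Z}^n$), $K(P)$ is the linear subspace parallel to the affine hull of $\mathrm{core}(P)$, and the natural projection is the quotient map $\pi_P:\mathbb{R}^n\to\mathbb{R}^n/K(P)$; $Q$ is considered with respect to the lattice $\mathbb{Z}^n/(K(P)\cap\mathbb{Z}^n)$. *)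

From HB Require Import structures.
From mathcomp Require Import all_boot all_order all_algebra.
From mathcomp Require Import boolp classical_sets reals.
Set Implicit Arguments. Unset Strict Implicit. Unset Printing Implicit Defensive.
Import Order.TTheory GRing.Theory Num.Theory.
Local Open Scope ring_scope.
Local Open Scope classical_set_scope.

Definition dotv (R : realType) (k : nat) (a x : 'rV[R]_k) : R :=
  \sum_(j < k) a 0 j * x 0 j.

Definition integral_vec (R : realType) (k : nat) (a : 'rV[R]_k) : Prop :=
  forall j, a 0 j \is a Num.int.

Definition primitive_vec (R : realType) (k : nat) (a : 'rV[R]_k) : Prop :=
  integral_vec a /\
  forall d : nat, (1 < d)%N -> ~ (forall j, a 0 j / d%:R \is a Num.int).

Definition rational_num (R : realType) (b : R) : Prop := exists q : rat, b = ratr q.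

Definition ineq_set (R : realType) (k N : nat) (a : 'I_N -> 'rV[R]_k) (b : 'I_N -> R)
  : set 'rV[R]_k := [set x | forall i, b i <= dotv (a i) x].

Definition aff_dim_ge (R : realType) (k d : nat) (S : set 'rV[R]_k) : Prop :=
  exists (x0 : 'rV[R]_k) (v : 'M[R]_(d, k)),
    S x0 /\ (forall r, S (x0 + row r v)) /\ \rank v = d.

Definition rat_polytope_desc (R : realType) (k : nat) (P : set 'rV[R]_k)
  (N : nat) (a : 'I_N -> 'rV[R]_k) (b : 'I_N -> R) : Prop :=
  P = ineq_set a b /\ [/\
      (exists M : R, forall x, P x -> forall j, `|x 0 j| <= M),
      (exists (x : 'rV[R]_k) (e : R), 0 < e /\ forall y : 'rV[R]_k,
          (forall j, `|y 0 j - x 0 j| < e) -> P y),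
      (forall i, primitive_vec (a i) /\ rational_num (b i)),
      (forall i, [set x | forall i', i' != i -> b i' <= dotv (a i') x] <> P)
    &
      (forall i, aff_dim_ge k.-1 [set x | P x /\ dotv (a i) x = b i])].

Definition level_set (R : realType) (k N : nat) (a : 'I_N -> 'rV[R]_k) (b : 'I_N -> R)
  (s : R) : set 'rV[R]_k := [set x | forall i, s <= dotv (a i) x - b i].

Definition qcodeg (R : realType) (k N : nat) (a : 'I_N -> 'rV[R]_k) (b : 'I_N -> R) : R :=
  (sup [set s : R | 0 < s /\ level_set a b s !=set0])^-1.

Definition core (R : realType) (k N : nat) (a : 'I_N -> 'rV[R]_k) (b : 'I_N -> R)
  : set 'rV[R]_k := level_set a b (qcodeg a b)^-1.

Definition direction_space (R : realType) (k : nat) (S : set 'rV[R]_k) : set 'rV[R]_k :=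
  [set v | exists (M : nat) (c : 'I_M -> R) (y z : 'I_M -> 'rV[R]_k),
     (forall t, S (y t) /\ S (z t)) /\ v = \sum_(t < M) c t *: (y t - z t)].

From HB Require Import structures.
From mathcomp Require Import all_boot all_order all_algebra.
From mathcomp Require Import boolp classical_sets reals.
From mathcomp Require Import topology normedtype derive.
From mathcomp Require Import lra.
Import Order.TTheory GRing.Theory Num.Theory.
Import numFieldTopology.Exports numFieldNormedType.Exports.
Local Open Scope ring_scope.
Local Open Scope classical_set_scope.
Set Implicit Arguments. Unset Strict Implicit. Unset Printing Implicit Defensive.

(* The image Q of P is cut out by the inequalities obtained from those of P by
   Fourier-Motzkin elimination of the kernel directions; a minimal subsystem,
   rescaled to primitive normals, is an irredundant rational description.

   For the codegree, call a facet of P tight when its slack is constant, equal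
   to 1/mu(P), on core(P).  At a relative interior point c of core(P) no
   direction increases all tight slacks, and K(P) is exactly the space
   orthogonal to the tight normals a_i; hence each a_i factors through the
   projection as an integral vector u_i.  The image of a tight facet is a facet
   of Q with primitive normal lam * u_i, 0 < lam <= 1, so d_Q(y) is at most the
   tight slack of any preimage of y.  A point of Q with d_Q > 1/mu(P) would lift
   to a direction increasing every tight slack at c, which is impossible; when
   mu(Q) = mu(P) the same argument puts every lift of a point of core(Q) in
   c + K(P), so core(Q) is the single point pi(c) = pi(core(P)). *)

Section DotProduct.
Variables (R : realType) (k : nat).
Implicit Types (a c u x y : 'rV[R]_k).

Lemma dotvE a x : dotv a x = (a *m x^T) 0 0.
Proof. by rewrite /dotv !mxE; apply: eq_bigr => j _; rewrite !mxE. Qed.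

Lemma dotvC a x : dotv a x = dotv x a.
Proof. by rewrite /dotv; apply: eq_bigr => j _; rewrite mulrC. Qed.

Lemma dotvDr a x y : dotv a (x + y) = dotv a x + dotv a y.
Proof. by rewrite /dotv -big_split; apply: eq_bigr => j _; rewrite mxE mulrDr. Qed.

Lemma dotvZr a x t : dotv a (t *: x) = t * dotv a x.
Proof. by rewrite /dotv mulr_sumr; apply: eq_bigr => j _; rewrite mxE mulrCA. Qed.

Lemma dotv0r a : dotv a 0 = 0.
Proof. by rewrite -(scale0r 0) dotvZr mul0r. Qed.

Lemma dotvNr a x : dotv a (- x) = - dotv a x.
Proof. by rewrite -scaleN1r dotvZr mulN1r. Qed.

Lemma dotvBr a x y : dotv a (x - y) = dotv a x - dotv a y.
Proof. by rewrite dotvDr dotvNr. Qed.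

Lemma dotvDl a c x : dotv (a + c) x = dotv a x + dotv c x.
Proof. by rewrite dotvC dotvDr -!(dotvC x). Qed.

Lemma dotvZl a x t : dotv (t *: a) x = t * dotv a x.
Proof. by rewrite dotvC dotvZr dotvC. Qed.

Lemma dotvNl a x : dotv (- a) x = - dotv a x.
Proof. by rewrite dotvC dotvNr dotvC. Qed.

Lemma dotvBl a c x : dotv (a - c) x = dotv a x - dotv c x.
Proof. by rewrite dotvDl dotvNl. Qed.

Lemma dotv0l x : dotv 0 x = 0.
Proof. by rewrite dotvC dotv0r. Qed.

Lemma dotv_sumr a (I : Type) (s : seq I) (P : pred I) (F : I -> 'rV[R]_k) :
  dotv a (\sum_(i <- s | P i) F i) = \sum_(i <- s | P i) dotv a (F i).
Proof. exact: (big_morph (dotv a) (dotvDr a) (dotv0r a)). Qed.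

Lemma dotv_self_eq0 a : dotv a a = 0 -> a = 0.
Proof.
move=> /eqP; rewrite psumr_eq0 => [/allP H|j _]; last by rewrite -expr2 sqr_ge0.
apply/matrixP => i j; rewrite ord1 mxE.
by have /(_ (mem_index_enum j)) := H j; rewrite /= mulf_eq0 orbb => /eqP.
Qed.

Lemma dotv_self_gt0 a : a != 0 -> 0 < dotv a a.
Proof.
move=> an0; rewrite lt_neqAle eq_sym; apply/andP; split.
  by apply: contra an0 => /eqP/dotv_self_eq0 ->.
by apply: sumr_ge0 => j _; rewrite -expr2 sqr_ge0.
Qed.

Lemma normr_coord_le_sum x j : `|x 0 j| <= \sum_i `|x 0 i|.
Proof. by rewrite (bigD1 j) //= lerDl sumr_ge0. Qed.

Lemma normr_dotv_le a y M : (forall j, `|y 0 j| <= M) ->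
  `|dotv a y| <= M * \sum_j `|a 0 j|.
Proof.
move=> hy; apply: le_trans (ler_norm_sum _ _ _) _; rewrite mulr_sumr.
by apply: ler_sum => j _; rewrite normrM mulrC ler_wpM2r.
Qed.

Lemma exists_coord_neq0 x : x != 0 -> exists j, x 0 j != 0.
Proof.
move=> xn0; apply/not_existsP => H; move/eqP: xn0; apply.
by apply/matrixP => i j; rewrite ord1 mxE; move: (H j) => /negP; rewrite negbK => /eqP.
Qed.

Lemma dotv_orth_parallel u c : u != 0 ->
  (forall h, dotv u h = 0 -> dotv c h = 0) ->
  c = (dotv c u / dotv u u) *: u.
Proof.
move=> un0 hperp; apply/eqP; rewrite -subr_eq0; apply/eqP/dotv_self_eq0.
set h := c - _ *: u.
have uh : dotv u h = 0.
  by rewrite dotvBr dotvZr (dotvC u c) divfK ?subrr // gt_eqF ?dotv_self_gt0.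
by rewrite {1}/h dotvBl dotvZl uh mulr0 subr0 hperp.
Qed.

End DotProduct.

Lemma dotv_mulmx (R : realType) k l (u : 'rV[R]_l) (x : 'rV[R]_k) (A : 'M[R]_(k, l)) :
  dotv u (x *m A) = dotv (u *m A^T) x.
Proof. by rewrite !dotvE trmx_mul mulmxA. Qed.

Section Rational.
Variable R : realType.
Implicit Types (x y : R).

Definition rational_vec k (c : 'rV[R]_k) := forall j, rational_num (c 0 j).

Lemma rational_int (z : int) : rational_num (z%:~R : R).
Proof. by exists z%:~R; rewrite rmorph_int. Qed.

Lemma rational1 : rational_num (1 : R). Proof. exact: (rational_int 1). Qed.

Lemma rationalD x y : rational_num x -> rational_num y -> rational_num (x + y).
Proof. by move=> [p ->] [q ->]; exists (p + q); rewrite rmorphD. Qed.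

Lemma rationalN x : rational_num x -> rational_num (- x).
Proof. by move=> [p ->]; exists (- p); rewrite rmorphN. Qed.

Lemma rationalM x y : rational_num x -> rational_num y -> rational_num (x * y).
Proof. by move=> [p ->] [q ->]; exists (p * q); rewrite rmorphM. Qed.

Lemma rationalV x : rational_num x -> rational_num x^-1.
Proof. by move=> [p ->]; exists p^-1; rewrite fmorphV. Qed.

Lemma rational_sum (I : Type) (s : seq I) (P : pred I) (F : I -> R) :
  (forall i, P i -> rational_num (F i)) -> rational_num (\sum_(i <- s | P i) F i).
Proof. by move=> H; elim/big_ind: _ => //; [exact: (rational_int 0)| exact: rationalD]. Qed.

Lemma rational_prod (I : Type) (s : seq I) (P : pred I) (F : I -> R) :
  (forall i, P i -> rational_num (F i)) -> rational_num (\prod_(i <- s | P i) F i).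
Proof. by move=> H; elim/big_ind: _ => //; [exact: rational1| exact: rationalM]. Qed.

Lemma rational_of_int x : x \is a Num.int -> rational_num x.
Proof. by move=> /intrP[z ->]; exact: rational_int. Qed.

Lemma rational_dotv k (a x : 'rV[R]_k) :
  rational_vec a -> rational_vec x -> rational_num (dotv a x).
Proof. by move=> ha hx; apply: rational_sum => j _; apply: rationalM. Qed.

Lemma rational_vecD k (a x : 'rV[R]_k) :
  rational_vec a -> rational_vec x -> rational_vec (a + x).
Proof. by move=> ha hx j; rewrite mxE; apply: rationalD. Qed.

Lemma rational_vecZ k (a : 'rV[R]_k) t :
  rational_num t -> rational_vec a -> rational_vec (t *: a).
Proof. by move=> ht ha j; rewrite mxE; apply: rationalM. Qed.

Lemma rational_vec_mulmx k l (a : 'rV[R]_k) (B : 'M[R]_(k, l)) :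
  rational_vec a -> (forall i j, rational_num (B i j)) -> rational_vec (a *m B).
Proof. by move=> ha hB j; rewrite mxE; apply: rational_sum => i _; apply: rationalM. Qed.

End Rational.

Section StrictInequalities.
Variables (R : realType) (k : nat).

Lemma strict_ineq_stable (I J : finType) (c : I -> 'rV[R]_k) (d : I -> R)
    (p : pred I) (w : 'rV[R]_k) (h : J -> 'rV[R]_k) :
  (forall i, p i -> d i < dotv (c i) w) ->
  exists t, 0 < t /\ forall i j, p i -> d i < dotv (c i) (w + t *: h j).
Proof.
move=> H.
pose g i := dotv (c i) w - d i.
pose e i j := dotv (c i) (h j).
(* the step for (i, j) keeps half of the slack g i when e i j < 0 *)
pose step (ij : I * J) :=
  if p ij.1 && (e ij.1 ij.2 < 0) then g ij.1 / (2 * - e ij.1 ij.2) else 1.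
have step_gt0 ij : 0 < step ij.
  rewrite /step; case: ifP => // /andP[pi ei]; apply: divr_gt0.
    by rewrite subr_gt0 H.
  by rewrite mulr_gt0 // oppr_gt0.
exists (\big[Num.min/1]_ij step ij); split; first exact: lt_bigmin.
move=> i j pi; set t := \big[_/_]_ij _.
have t0 : 0 < t by exact: lt_bigmin.
have gi : 0 < g i by rewrite subr_gt0 H.
rewrite dotvDr dotvZr -subr_gt0 -/(e i j).
have -> : dotv (c i) w + t * e i j - d i = g i + t * e i j by rewrite /g; lra.
have [eneg|epos] := ltP (e i j) 0; last by have := mulr_ge0 (ltW t0) epos; lra.
have : t <= step (i, j) by apply: bigmin_le.
rewrite /step /= pi eneg /= ler_pdivlMr; last by rewrite mulr_gt0 // oppr_gt0.
nra.
Qed.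

Lemma strict_ineq_step (I : finType) (c : I -> 'rV[R]_k) (d : I -> R) (p : pred I)
    (w v : 'rV[R]_k) :
  (forall i, p i -> d i < dotv (c i) w) ->
  exists t, 0 < t /\ forall i, p i -> d i < dotv (c i) (w + t *: v).
Proof.
move=> /(strict_ineq_stable (fun _ : 'I_1 => v)) [t [t0 ht]].
by exists t; split => // i; exact: ht i ord0.
Qed.

Lemma strict_ineq_box (I : finType) (c : I -> 'rV[R]_k) (d : I -> R) (p : pred I)
    (w : 'rV[R]_k) :
  (forall i, p i -> d i < dotv (c i) w) ->
  exists eta, 0 < eta /\ forall h : 'rV[R]_k, (forall j, `|h 0 j| <= eta) ->
    forall i, p i -> d i < dotv (c i) (w + h).
Proof.
move=> H; pose S i := \sum_j `|c i 0 j| + 1.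
have S0 i : 0 < S i by rewrite ltr_wpDl // sumr_ge0.
pose ratio i := (dotv (c i) w - d i) / (2 * S i).
have ratio_gt0 i : p i -> 0 < ratio i.
  by move=> pi; rewrite divr_gt0 ?mulr_gt0 // subr_gt0 H.
exists (\big[Num.min/1]_(i | p i) ratio i); split; first exact: lt_bigmin.
move=> h hh i pi; rewrite dotvDr.
have := normr_dotv_le (c i) hh; set eta := \big[_/_]_(_ | _) _ => hci.
have eta_ratio : eta <= ratio i by apply: bigmin_le_cond.
have hS : eta * S i <= (dotv (c i) w - d i) / 2.
  have -> : (dotv (c i) w - d i) / 2 = ratio i * S i.
    by rewrite /ratio invfM mulrA mulfVK ?gt_eqF.
  by rewrite ler_pM2r.
have eta0 : 0 < eta by exact: lt_bigmin.
have : eta * (\sum_j `|c i 0 j|) <= eta * S i by rewrite ler_pM2l // lerDl.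
have := ler_norm (- dotv (c i) h); rewrite normrN; have := H i pi; lra.
Qed.

Lemma local_ge0_orth (u c : 'rV[R]_k) (eta : R) : 0 < eta ->
  (forall h, dotv u h = 0 -> (forall j, `|h 0 j| <= eta) -> 0 <= dotv c h) ->
  forall h, dotv u h = 0 -> dotv c h = 0.
Proof.
move=> eta0 H.
suff ge0 h : dotv u h = 0 -> 0 <= dotv c h.
  by move=> h uh; apply/eqP; rewrite eq_le ge0 // -oppr_ge0 -dotvNr ge0 // dotvNr uh oppr0.
move=> uh; pose t := eta / (\sum_j `|h 0 j| + 1).
have S0 : 0 < \sum_j `|h 0 j| + 1 by rewrite ltr_wpDl // sumr_ge0.
have t0 : 0 < t by rewrite divr_gt0.
suff : 0 <= dotv c (t *: h) by rewrite dotvZr pmulr_rge0.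
apply: H; first by rewrite dotvZr uh mulr0.
move=> j; rewrite mxE normrM gtr0_norm // -[X in _ <= X](divfK (lt0r_neq0 S0)) -/t.
by rewrite ler_pM2l // (le_trans (normr_coord_le_sum h j)) ?lerDl.
Qed.

Lemma interior_strict N (c : 'I_N -> 'rV[R]_k) (d : 'I_N -> R) (x0 : 'rV[R]_k) (e : R) :
  0 < e -> (forall y : 'rV[R]_k, (forall j, `|y 0 j - x0 0 j| < e) -> ineq_set c d y) ->
  forall l, c l != 0 -> d l < dotv (c l) x0.
Proof.
move=> e0 hbox l cn0.
pose M := \sum_j `|c l 0 j| + 1.
have M0 : 0 < M by rewrite /M ltr_wpDl // sumr_ge0.
pose t := e / (2 * M).
have t0 : 0 < t by rewrite /t divr_gt0 // mulr_gt0.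
have : ineq_set c d (x0 - t *: c l).
  apply: hbox => j; rewrite !mxE addrAC subrr add0r normrN normrM (gtr0_norm t0).
  have hj := normr_coord_le_sum (c l) j.
  have htM : t * M = e / 2.
    by rewrite /t invfM mulrA mulrAC mulfK ?gt_eqF // mulrC.
  have : t * `|c l 0 j| <= t * (M - 1) by rewrite ler_pM2l // /M addrK.
  lra.
move=> /(_ l); rewrite dotvBr dotvZr.
have := mulr_gt0 t0 (dotv_self_gt0 cn0); lra.
Qed.

End StrictInequalities.

Section Compactness.
Variables (R : realType) (k : nat).

Lemma continuous_dotv (a : 'rV[R]_k) : continuous (dotv a).
Proof.
rewrite /dotv; elim: (index_enum _) => [|j s IH].
  by under eq_fun do rewrite big_nil; exact: cst_continuous.
under eq_fun do rewrite big_cons.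
move=> x; apply: (@continuousD _ _ _ (fun x : 'rV[R]_k => a 0 j * x 0 j)); last exact: IH.
apply: (@continuousM _ _ (fun=> a 0 j) (fun x : 'rV[R]_k => x 0 j)).
  exact: cst_continuous.
exact: coord_continuous.
Qed.

Lemma closed_ineq_set N (c : 'I_N -> 'rV[R]_k) (d : 'I_N -> R) : closed (ineq_set c d).
Proof.
have -> : ineq_set c d = \bigcap_(i in setT) (dotv (c i) @^-1` [set r | d i <= r]).
  by apply/seteqP; split => x /= H i => [_|]; [exact: H | exact: (H i I)].
apply: closed_bigI => i _.
apply: (proj1 (continuous_closedP _) (@continuous_dotv (c i))); exact: closed_ge.
Qed.

Lemma min_slack_attained N (c : 'I_N -> 'rV[R]_k) (d : 'I_N -> R) :
  (exists M : R, forall x, ineq_set c d x -> forall j, `|x 0 j| <= M) ->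
  ineq_set c d !=set0 ->
  exists x0, ineq_set c d x0 /\ forall y s, ineq_set c d y ->
    (forall i, s <= dotv (c i) y - d i) -> forall i, s <= dotv (c i) x0 - d i.
Proof.
move=> [M hM] [z hz].
case: N c d hM z hz => [|N] c d hM z hz; first by exists z; split => // y s _ _ [].
pose F i x := dotv (c i) x - d i.
pose f x := \big[Num.min/F ord0 x]_i F i x.
have cF i : continuous (F i).
  by move=> x; apply: continuousB; [exact: continuous_dotv | exact: cst_continuous].
have cf : continuous f.
  rewrite /f; elim: (index_enum _) => [|j s IH].
    by under eq_fun do rewrite big_nil; exact: cF.
  under eq_fun do rewrite big_cons.
  by move=> x; apply: continuous_min; [exact: cF | exact: IH].
have cpt : compact (ineq_set c d).
  apply: bounded_closed_compact; last exact: closed_ineq_set.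
  exists `|M|; split; first by rewrite num_real.
  move=> M' hM' x /hM Hx /=.
  have -> : `|x| = mx_norm x by [].
  rewrite mx_normrE.
  elim/big_ind: _ => //.
  - by apply: ltW; apply: le_lt_trans hM'.
  - by move=> u v hu hv; rewrite ge_max hu hv.
  - move=> [i j] _ /=; rewrite ord1; apply: le_trans (Hx j) _.
    by apply: ltW; apply: le_lt_trans hM'; exact: ler_norm.
have [x0 x0in x0max] := EVT_max_rV (ex_intro _ z hz) cpt (continuous_subspaceT cf).
exists x0; split; first by move: x0in; rewrite inE.
move=> y s Py Hs i.
have : f y <= f x0 by apply: x0max; rewrite inE.
have : s <= f y by apply: le_bigmin => [|j _]; exact: Hs.
have : f x0 <= F i x0 by apply: bigmin_le.
rewrite /F; lra.
Qed.

End Compactness.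

Section FourierMotzkin.
Variables (R : realType) (k : nat).
Implicit Types (s : seq ('rV[R]_k * R)) (e z : 'rV[R]_k).

Definition ineq_seq s z : Prop := forall p, p \in s -> p.2 <= dotv p.1 z.

(* Eliminating the direction e: keep the inequalities blind to e and add every
   positive combination of one with positive and one with negative e-slope. *)
Definition fm_step e s :=
  [seq p <- s | dotv p.1 e == 0] ++
  [seq ((- dotv q.1 e) *: p.1 + dotv p.1 e *: q.1,
        (- dotv q.1 e) * p.2 + dotv p.1 e * q.2)
    | p <- [seq p <- s | 0 < dotv p.1 e], q <- [seq q <- s | dotv q.1 e < 0]].

Lemma fm_step_bounds e s z p q : ineq_seq (fm_step e s) z ->
  p \in s -> q \in s -> 0 < dotv p.1 e -> dotv q.1 e < 0 ->
  (p.2 - dotv p.1 z) / dotv p.1 e <= (q.2 - dotv q.1 z) / dotv q.1 e.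
Proof.
move=> H ps qs pe qe.
have : (- dotv q.1 e) * p.2 + dotv p.1 e * q.2 <=
       dotv ((- dotv q.1 e) *: p.1 + dotv p.1 e *: q.1) z.
  apply: (H (_, _)); rewrite mem_cat; apply/orP; right.
  by apply/allpairsP; exists (p, q); rewrite !mem_filter pe qe ps qs.
rewrite dotvDl !dotvZl.
set al := dotv p.1 e; set be := dotv q.1 e.
set u := dotv p.1 z; set v := dotv q.1 z => hc.
set U := (p.2 - u) / al; set V := (q.2 - v) / be.
have hU : p.2 - u = U * al by rewrite /U divfK ?gt_eqF.
have hV : q.2 - v = V * be by rewrite /V divfK ?lt_eqF.
have hab : 0 < al * - be by rewrite mulr_gt0 // oppr_gt0.
nra.
Qed.

Lemma fm_stepP e s z : ineq_seq (fm_step e s) z <-> exists t, ineq_seq s (z + t *: e).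
Proof.
split; last first.
  move=> [t H] r; rewrite mem_cat => /orP[|].
    rewrite mem_filter => /andP[/eqP pe ps].
    by have := H r ps; rewrite dotvDr dotvZr pe mulr0 addr0.
  move=> /allpairsP[[p q] [/= pin qin ->]] /=.
  move: pin qin; rewrite !mem_filter => /andP[pe ps] /andP[qe qs].
  have := H p ps; have := H q qs; rewrite !dotvDr !dotvZr dotvDl !dotvZl.
  by move: pe qe; nra.
move=> H.
pose pos := [seq p <- s | 0 < dotv p.1 e].
pose neg := [seq q <- s | dotv q.1 e < 0].
pose lo p := (p.2 - dotv p.1 z) / dotv p.1 e.
pose hi q := (q.2 - dotv q.1 z) / dotv q.1 e.
pose m0 := \big[Num.min/0]_(q <- neg) hi q.
pose t := \big[Num.max/m0]_(p <- pos) lo p.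
have lohi p q : p \in pos -> q \in neg -> lo p <= hi q.
  by rewrite /pos /neg !mem_filter => /andP[pe ps] /andP[qe qs]; exact: fm_step_bounds H ps qs pe qe.
exists t => p ps; rewrite dotvDr dotvZr.
have [pe|pe|pe] := ltgtP (dotv p.1 e) 0.
- have pn : p \in neg by rewrite mem_filter pe.
  have : t <= hi p.
    rewrite /t big_seq; apply: bigmax_le => [|p' /lohi]; last exact.
    exact: ge_bigmin_seq.
  by rewrite /hi ler_ndivlMr // => h; lra.
- have pn : p \in pos by rewrite mem_filter pe.
  have : lo p <= t by exact: le_bigmax_seq.
  by rewrite /lo ler_pdivrMr // => h; lra.
- have : p.2 <= dotv p.1 z by apply: H; rewrite mem_cat mem_filter pe eqxx ps.
  by rewrite pe mulr0 addr0.
Qed.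

Fixpoint spans (es : seq 'rV[R]_k) (w : 'rV[R]_k) : Prop :=
  if es is e :: es' then exists t w', w = t *: e + w' /\ spans es' w' else w = 0.

Definition fm_all es s := foldr fm_step s es.

Lemma fm_allP es s z :
  ineq_seq (fm_all es s) z <-> exists w, spans es w /\ ineq_seq s (z + w).
Proof.
elim: es z => [|e es IH] z /=.
  by split => [H|[w [-> H]]]; [exists 0; rewrite addr0 | rewrite addr0 in H].
rewrite fm_stepP; split.
  move=> [t /IH [w [hw H]]]; exists (t *: e + w); split; first by exists t, w.
  by rewrite addrA.
move=> [w [[t [w' [-> hw']]] H]]; exists t; apply/IH; exists w'; split => //.
by rewrite -addrA.
Qed.

Definition rational_sys s := forall p, p \in s -> rational_vec p.1 /\ rational_num p.2.

Lemma rational_fm_step e s : rational_vec e -> rational_sys s -> rational_sys (fm_step e s).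
Proof.
move=> re rs p; rewrite mem_cat => /orP[|]; first by rewrite mem_filter => /andP[_ /rs].
move=> /allpairsP[[p' q] [/= pin qin ->]] /=.
move: pin qin; rewrite !mem_filter => /andP[_ /rs [r1 r2]] /andP[_ /rs [r3 r4]].
have hp := rational_dotv r1 re; have hq := rational_dotv r3 re.
split; first by apply: rational_vecD; apply: rational_vecZ => //; apply: rationalN.
by apply: rationalD; apply: rationalM => //; apply: rationalN.
Qed.

Lemma rational_fm_all es s :
  (forall e, e \in es -> rational_vec e) -> rational_sys s -> rational_sys (fm_all es s).
Proof.
elim: es => [|e es IH] //= he rs.
apply: rational_fm_step; first by apply: he; rewrite mem_head.
by apply: IH => // e' h; apply: he; rewrite in_cons h orbT.
Qed.

End FourierMotzkin.

Section Primitive.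
Variables (R : realType) (k : nat).
Implicit Types (u v c : 'rV[R]_k).

Lemma primitive_vec_neq0 v : primitive_vec v -> v != 0.
Proof.
move=> [_ H]; apply/eqP => v0; apply: (H 2%N) => // j.
by rewrite v0 mxE mul0r rpred0.
Qed.

Lemma rational_vec_clear_den c : rational_vec c ->
  exists D : R, 0 < D /\ rational_num D /\ integral_vec (D *: c).
Proof.
move=> rc; have [q hq] := choice rc.
exists (\prod_j ((denq (q j))%:~R : R)); split; [|split].
- by apply: prodr_gt0 => j _; rewrite ltr0z denq_gt0.
- by apply: rational_prod => j _; exact: rational_int.
- move=> j; rewrite mxE hq (bigD1 j) //= mulrC mulrA.
  have -> : ratr (q j) * (denq (q j))%:~R = (numq (q j))%:~R :> R.
    by rewrite -[RHS](rmorph_int (@ratr R)) numqE rmorphM rmorph_int.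
  by apply: rpredM; [exact: intr_int | apply: rpred_prod => i _; exact: intr_int].
Qed.

Lemma integral_vec_norm_ge1 v : integral_vec v -> v != 0 -> 1 <= \sum_i `|v 0 i|.
Proof.
move=> iv /exists_coord_neq0 [j hj].
by apply: le_trans (normr_coord_le_sum v j); apply: norm_intr_ge1.
Qed.

(* Divide by a common integer factor d >= 2 as long as there is one; this
   terminates since the l1-norm is at least 1 and is divided by d each time. *)
Lemma integral_vec_scale_primitive v : integral_vec v -> v != 0 ->
  exists l : R, 0 < l /\ rational_num l /\ primitive_vec (l *: v).
Proof.
suff H n : forall v, integral_vec v -> v != 0 -> \sum_i `|v 0 i| <= n%:R ->
    exists l : R, 0 < l /\ rational_num l /\ primitive_vec (l *: v).
  move=> iv vn0; apply: (H (Num.Def.archi_bound (\sum_i `|v 0 i|))) => //.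
  by apply: ltW; apply: archi_boundP; apply: sumr_ge0.
elim: n => [|n IH] {}v iv vn0 hs; first by have := integral_vec_norm_ge1 iv vn0; lra.
have [[d [hd hdiv]]|nodiv] :=
  pselect (exists d, (1 < d)%N /\ forall j, v 0 j / d%:R \is a Num.int); last first.
  exists 1; split; first exact: ltr01; split; first exact: rational1.
  rewrite scale1r; split => // d hd hall; apply: nodiv; exists d; split => //.
have d0 : (0 : R) < d%:R by rewrite ltr0n (ltn_trans _ hd).
have d2 : (2 : R) <= d%:R by rewrite ler_nat.
pose v' := (d%:R)^-1 *: v.
have iv' : integral_vec v' by move=> j; rewrite mxE mulrC hdiv.
have v'n0 : v' != 0 by rewrite scaler_eq0 negb_or invr_eq0 vn0 gt_eqF.
have hS : \sum_i `|v 0 i| = d%:R * \sum_i `|v' 0 i|.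
  rewrite mulr_sumr; apply: eq_bigr => i _; rewrite mxE normrM normfV.
  by rewrite (gtr0_norm d0) mulrA mulfV ?gt_eqF // mul1r.
have h1 := integral_vec_norm_ge1 iv' v'n0.
have : \sum_i `|v' 0 i| <= n%:R.
  move: hs h1 d2; rewrite hS -natr1; set S := \sum_i _; set D := d%:R; nra.
move=> /(IH v' iv' v'n0) [l' [l'0 [rl' pl']]].
exists (l' / d%:R); split; first exact: divr_gt0.
split; last by rewrite -scalerA.
by apply: rationalM => //; apply: rationalV; exact: (@rational_int R d).
Qed.

Lemma rational_vec_scale_primitive c : rational_vec c -> c != 0 ->
  exists l : R, 0 < l /\ rational_num l /\ primitive_vec (l *: c).
Proof.
move=> rc cn0; have [D [D0 [rD iD]]] := rational_vec_clear_den rc.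
have /(integral_vec_scale_primitive iD) [l [l0 [rl pl]]] : D *: c != 0.
  by rewrite scaler_eq0 negb_or gt_eqF.
exists (l * D); split; first exact: mulr_gt0.
by split; [exact: rationalM | rewrite -scalerA].
Qed.

(* A primitive vector is never a proper multiple of an integral one: writing
   lam = p/q in lowest terms, p divides every coordinate of lam *: u. *)
Lemma primitive_vec_scale_le1 u lam :
  integral_vec u -> 0 < lam -> primitive_vec (lam *: u) -> lam <= 1.
Proof.
move=> iu l0 pu.
have un0 : u != 0.
  by apply: contraTneq (primitive_vec_neq0 pu) => ->; rewrite scaler0 eqxx.
have [j0 hj0] := exists_coord_neq0 un0.
have [z hz] := intrP (iu j0).
have [w hw] := intrP (proj1 pu j0).
have z0 : z != 0 by apply: contraNneq hj0 => z0; rewrite hz z0.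
pose r : rat := w%:~R / z%:~R.
have hl : lam = ratr r by rewrite /r fmorph_div !rmorph_int -hw -hz mxE mulfK.
have r0 : 0 < r by rewrite -(ltr0q R) -hl.
rewrite leNgt; apply/negP => l1.
have hpq : (denq r < numq r)%R.
  have : 1 < r.
    have : (0 : R) < ratr (r - 1).
      have -> : ratr (r - 1) = lam - 1 :> R by rewrite hl rmorphB rmorph1.
      by rewrite subr_gt0.
    by rewrite ltr0q subr_gt0.
  rewrite -[r in 1 < r]divq_num_den ltr_pdivlMr ?ltr0z ?denq_gt0 // mul1r.
  by rewrite ltr_int.
have p0 : (0 < numq r)%R by rewrite numq_gt0.
have hlq : lam * (denq r)%:~R = (numq r)%:~R.
  by rewrite hl -[r in ratr r]divq_num_den fmorph_div !rmorph_int divfK // intr_eq0 denq_neq0.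
case: pu => iv /(_ `|numq r|%N); apply.
  rewrite -ltz_nat gtz0_abs //; apply: le_lt_trans hpq.
  by rewrite -gtz0_ge1 denq_gt0.
move=> j; have [a ha] := intrP (iv j); have [b hb] := intrP (iu j).
have hab : a * denq r = numq r * b.
  by apply: (@intr_inj R); rewrite !intrM -ha -hb mxE mulrAC hlq mulrC.
have : (numq r %| a * denq r)%Z by rewrite hab dvdz_mulr.
rewrite Gauss_dvdzl; last exact: coprime_num_den.
move=> /dvdzP [t ht].
rewrite ha ht intrM natr_absz gtr0_norm // mulfK; first exact: intr_int.
by rewrite intr_eq0 gt_eqF.
Qed.

End Primitive.

Section Facets.
Variables (R : realType) (k N : nat) (c : 'I_N -> 'rV[R]_k) (d : 'I_N -> R).

Definition drop_ineq i := [set x | forall l, l != i -> d l <= dotv (c l) x].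

Lemma irredundant_witness i : drop_ineq i <> ineq_set c d ->
  exists z, drop_ineq i z /\ dotv (c i) z < d i.
Proof.
move=> hirr; apply: contra_notP hirr => nex; apply/seteqP; split => x hx /=; last first.
  by move=> l _; exact: hx.
move=> l; have [->|hl] := eqVneq l i; last exact: hx.
by rewrite leNgt; apply/negP => hlt; apply: nex; exists x.
Qed.

Lemma facet_relint (x0 : 'rV[R]_k) i :
  (forall l, d l < dotv (c l) x0) -> drop_ineq i <> ineq_set c d ->
  exists w, dotv (c i) w = d i /\ forall l, l != i -> d l < dotv (c l) w.
Proof.
move=> hx0 /irredundant_witness [z [hz1 hz2]].
pose fx := dotv (c i) x0 - d i; pose fz := dotv (c i) z - d i.
have fx0 : 0 < fx by rewrite /fx subr_gt0 hx0.
have fz0 : fz < 0 by rewrite /fz subr_lt0.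
pose tau := fx / (fx - fz).
have htau : tau * (fx - fz) = fx by rewrite /tau divfK // gt_eqF //; lra.
have tau0 : 0 < tau by rewrite /tau divr_gt0 //; lra.
have tau1 : tau < 1 by rewrite /tau ltr_pdivrMr ?mul1r; lra.
exists (x0 + tau *: (z - x0)); split.
  by rewrite dotvDr dotvZr dotvBr; move: htau; rewrite /fx /fz; nra.
move=> l hl; rewrite dotvDr dotvZr dotvBr.
by have := hx0 l; have := hz1 l hl; nra.
Qed.

Lemma exists_orth_basis (u : 'rV[R]_k) : u != 0 ->
  exists V : 'M[R]_(k.-1, k), (forall r, dotv u (row r V) = 0) /\ \rank V = k.-1.
Proof.
move=> un0; have <- : \rank (kermx u^T) = k.-1.
  by rewrite mxrank_ker mxrank_tr rank_rV un0 subn1.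
exists (row_base (kermx u^T)); split; last by rewrite eq_row_base.
move=> r; have /sub_kermxP H : (row r (row_base (kermx u^T)) <= kermx u^T)%MS.
  by rewrite -(eq_row_base (kermx _)) row_sub.
by rewrite dotvC dotvE H mxE.
Qed.

Lemma irredundant_facet (x0 : 'rV[R]_k) i :
  (forall l, d l < dotv (c l) x0) -> c i != 0 -> drop_ineq i <> ineq_set c d ->
  aff_dim_ge k.-1 [set x | ineq_set c d x /\ dotv (c i) x = d i].
Proof.
move=> hx0 cn0 hirr.
have [w [hwi hwl]] := facet_relint hx0 hirr.
have [V [perp rkV]] := exists_orth_basis cn0.
have [t [t0 ht]] := strict_ineq_stable (p := fun l => l != i) (fun r => row r V) hwl.
have facet_row r : ineq_set c d (w + t *: row r V) /\ dotv (c i) (w + t *: row r V) = d i.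
  rewrite dotvDr dotvZr perp mulr0 addr0; split => // l.
  have [->|hl] := eqVneq l i; last exact: ltW (ht l r hl).
  by rewrite dotvDr dotvZr perp mulr0 addr0 hwi.
exists w, (t *: V); split; [|split].
- split => // l; have [->|hl] := eqVneq l i; first by rewrite hwi.
  exact: ltW (hwl l hl).
- by move=> r; rewrite linearZ; exact: facet_row.
- by rewrite (eqmx_scale _ (lt0r_neq0 t0)).
Qed.

End Facets.

Section MinimalDescription.
Variables (R : realType) (k L : nat) (c : 'I_L -> 'rV[R]_k) (d : 'I_L -> R).

Definition subsystem (T : {set 'I_L}) := [set y | forall l, l \in T -> d l <= dotv (c l) y].

Lemma minimal_subsystem : exists T,
  ineq_set c d = subsystem T /\ forall l, l \in T -> ineq_set c d <> subsystem (T :\ l).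
Proof.
pose good n := `[< exists T : {set 'I_L}, #|T| = n /\ ineq_set c d = subsystem T >].
have : exists n, good n.
  exists #|[set: 'I_L]%SET|; apply/asboolP; exists [set: 'I_L]%SET; split => //.
  by apply/seteqP; split => y hy /= l => [_|]; apply: hy; rewrite ?in_setT.
case/ex_minnP => _ /asboolP [T [<- hT]] hmin; exists T; split => // l lT hTl.
suff /hmin : good #|T :\ l| by rewrite (cardsD1 l T) lT add1n ltnn.
by apply/asboolP; exists (T :\ l).
Qed.

Lemma subsystemD1_normal0 T l x0 : subsystem T x0 -> c l = 0 ->
  subsystem (T :\ l) = subsystem T.
Proof.
move=> hx0 cl0; apply/seteqP; split => y hy l' hl' /=; last first.
  by apply: hy; move: hl'; rewrite in_setD1 => /andP[].
have [el|hne] := eqVneq l' l; last by apply: hy; rewrite in_setD1 hne.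
by rewrite el in hl' *; have := hx0 l hl'; rewrite cl0 !dotv0l.
Qed.

Lemma exists_primitive_scaling : (forall l, rational_vec (c l)) ->
  exists lam : 'I_L -> R, forall l,
    [/\ 0 < lam l, rational_num (lam l) & c l != 0 -> primitive_vec (lam l *: c l)].
Proof.
move=> hrat; have /choice [lam hlam] : forall l, exists lam : R,
    [/\ 0 < lam, rational_num lam & c l != 0 -> primitive_vec (lam *: c l)].
  move=> l; have [cl0|cln0] := eqVneq (c l) 0.
    by exists 1; split; [exact: ltr01 | exact: rational1 |].
  have [l' [h1 [h2 h3]]] := rational_vec_scale_primitive (hrat l) cln0.
  by exists l'.
by exists lam.
Qed.

Lemma exists_rat_polytope_desc :
  (forall l, rational_vec (c l) /\ rational_num (d l)) ->
  (exists M : R, forall x, ineq_set c d x -> forall j, `|x 0 j| <= M) ->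
  (exists (x : 'rV[R]_k) (e : R), 0 < e /\ forall y : 'rV[R]_k,
      (forall j, `|y 0 j - x 0 j| < e) -> ineq_set c d y) ->
  exists NQ (aQ : 'I_NQ -> 'rV[R]_k) (bQ : 'I_NQ -> R),
    rat_polytope_desc (ineq_set c d) aQ bQ.
Proof.
move=> hrat hbnd [x0 [e [e0 hbox]]].
have [T [hT hmin]] := minimal_subsystem.
have x0S : ineq_set c d x0 by apply: hbox => j; rewrite subrr normr0.
have cn0 l : l \in T -> c l != 0.
  move=> lT; apply/eqP => cl0; apply: (hmin l lT).
  by rewrite (@subsystemD1_normal0 _ _ x0) -?hT.
have [lam hlam] := exists_primitive_scaling (fun l => proj1 (hrat l)).
pose ev (i : 'I_#|T|) := enum_val i.
pose aQ i := lam (ev i) *: c (ev i).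
pose bQ i := lam (ev i) * d (ev i).
have scaled l y : (lam l * d l <= dotv (lam l *: c l) y) = (d l <= dotv (c l) y).
  by rewrite dotvZl ler_pM2l //; case: (hlam l).
have descQ (U : {set 'I_L}) : U \subset T ->
    subsystem U = [set y | forall i, ev i \in U -> bQ i <= dotv (aQ i) y].
  move=> UT; apply/seteqP; split => y /= hy => [i iU|l lU]; first by rewrite scaled hy.
  have lT : l \in T := fintype.subsetP UT l lU.
  by have := hy (enum_rank_in lT l); rewrite /aQ /bQ /ev enum_rankK_in // scaled; apply.
have SQ : ineq_set c d = ineq_set aQ bQ.
  rewrite hT descQ //; apply/seteqP; split => y hy i //; apply: hy; exact: enum_valP.
have irrQ i : drop_ineq aQ bQ i <> ineq_set c d.
  move=> hirr; apply: (hmin (ev i) (enum_valP i)).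
  rewrite -hirr descQ ?subsetDl //; apply/seteqP; split => y hy i'.
    by rewrite in_setD1 (inj_eq enum_val_inj) => /andP[/hy].
  by move=> hi'; apply: hy; rewrite in_setD1 enum_valP andbT (inj_eq enum_val_inj).
exists #|T|, aQ, bQ; split => //; split => //.
- by exists x0, e.
- move=> i; have [h1 h2 h3] := hlam (ev i); split; first by apply: h3; exact/cn0/enum_valP.
  by apply: rationalM => //; case: (hrat (ev i)).
- move=> i; have an0 l : aQ l != 0.
    rewrite scaler_eq0 negb_or cn0 ?enum_valP // andbT; by have [/gt_eqF ->] := hlam (ev l).
  have hboxQ (y : 'rV[R]_k) : (forall j, `|y 0 j - x0 0 j| < e) -> ineq_set aQ bQ y.
    by move=> /hbox; rewrite SQ.
  rewrite SQ; apply: (irredundant_facet (x0 := x0)) (an0 i) _.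
    by move=> l; have := interior_strict e0 hboxQ (an0 l).
  by rewrite -SQ; exact: irrQ.
Qed.

End MinimalDescription.

Section IntegralMatrices.
Variables (R : realType) (n m : nat) (A : 'M[R]_(n, m)).

Lemma integral_right_inverse :
  (forall z : 'rV[R]_m, integral_vec z -> exists y : 'rV[R]_n, integral_vec y /\ y *m A = z) ->
  exists B : 'M[R]_(m, n), B *m A = 1%:M /\ forall i j, B i j \is a Num.int.
Proof.
move=> hsurj.
have /choice [y hy] k0 : exists y : 'rV[R]_n, integral_vec y /\ y *m A = delta_mx 0 k0.
  by apply: hsurj => j; rewrite mxE; case: (_ && _); [exact: (@intr_int R 1) | exact: (@intr_int R 0)].
exists (\matrix_(k0, j) y k0 0 j); split; last by move=> i j; rewrite mxE; case: (hy i).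
apply/matrixP => k0 j; have := congr1 (fun M : 'rV[R]_m => M 0 j) (proj2 (hy k0)).
by rewrite !mxE eq_sym => <-; apply: eq_bigr => i _; rewrite !mxE.
Qed.

Definition kernel_basis := [seq row r (kermx A) | r <- index_enum 'I_n].

Lemma spans_kernel_basisP w : spans kernel_basis w <-> w *m A = 0.
Proof.
split.
  rewrite /kernel_basis; elim: (index_enum _) w => [|r s IH] w /=.
    by move->; rewrite mul0mx.
  move=> [t [w' [-> /IH hw']]].
  by rewrite mulmxDl hw' addr0 -scalemxAl -row_mul mulmx_ker row0 scaler0.
move=> /sub_kermxP /submxP [D ->]; rewrite mulmx_sum_row /kernel_basis.
elim: (index_enum _) => [|r s IH] /=; first by rewrite big_nil.
by rewrite big_cons; exists (D 0 r), (\sum_(r0 <- s) D 0 r0 *: row r0 (kermx A)).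
Qed.

Lemma rational_kernel_basis : (forall i j, A i j \is a Num.int) ->
  forall v, v \in kernel_basis -> rational_vec v.
Proof.
move=> Aint v /mapP[r _ ->] j.
pose AQ := \matrix_(i, j) ((Num.floor (A i j))%:~R : rat).
have -> : A = map_mx ratr AQ.
  by apply/matrixP => i j'; rewrite !mxE rmorph_int; apply/esym/eqP; rewrite -intrEfloor.
by rewrite -map_kermx; exists (kermx AQ r j); rewrite !mxE.
Qed.

Definition mx_abs_sum (M : 'M[R]_(n, m)) := \sum_j \sum_i `|M i j|.

Lemma mx_abs_sum_ge0 (M : 'M[R]_(n, m)) : 0 <= mx_abs_sum M.
Proof. by apply: sumr_ge0 => j _; apply: sumr_ge0. Qed.

Lemma normr_mulmx_le (h : 'rV[R]_n) (M : 'M[R]_(n, m)) (t : R) : 0 <= t ->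
  (forall i, `|h 0 i| <= t) -> forall j, `|(h *m M) 0 j| <= t * mx_abs_sum M.
Proof.
move=> t0 hh j.
rewrite mxE; apply: le_trans (ler_norm_sum _ _ _) _.
apply: (@le_trans _ _ (\sum_i t * `|M i j|)).
  by apply: ler_sum => i _; rewrite normrM ler_wpM2r.
rewrite -mulr_sumr ler_wpM2l // /mx_abs_sum (bigD1 j) //= lerDl.
by apply: sumr_ge0 => j' _; apply: sumr_ge0.
Qed.

End IntegralMatrices.

Lemma ineq_seq_nth (R : realType) k (s : seq ('rV[R]_k * R)) x :
  ineq_seq s x <-> ineq_set (fun l : 'I_(size s) => (nth (0, 0) s l).1)
                            (fun l : 'I_(size s) => (nth (0, 0) s l).2) x.
Proof.
split => [H l|H p ps]; first by apply: H; rewrite mem_nth.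
have ip : (index p s < size s)%N by rewrite index_mem.
by have := H (Ordinal ip); rewrite /= nth_index.
Qed.

Definition ineq_list (R : realType) k N (a : 'I_N -> 'rV[R]_k) (b : 'I_N -> R) :=
  [seq (a i, b i) | i <- index_enum 'I_N].

Lemma ineq_listP (R : realType) k N (a : 'I_N -> 'rV[R]_k) (b : 'I_N -> R) x :
  ineq_seq (ineq_list a b) x <-> ineq_set a b x.
Proof.
split => [H i|H p /mapP[i _ ->]]; last exact: H.
by apply: (H (a i, b i)); apply/mapP; exists i; rewrite ?mem_index_enum.
Qed.

Section LinearImage.
Variables (R : realType) (n m : nat) (A : 'M[R]_(n, m)) (B : 'M[R]_(m, n)).
Hypothesis BA : B *m A = 1%:M.
Variables (N : nat) (a : 'I_N -> 'rV[R]_n) (b : 'I_N -> R).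

Let image := (fun x => x *m A) @` ineq_set a b.

(* Eliminate the kernel of A, then read the inequalities in R^m through the
   section y |-> y *m B. *)
Definition image_system :=
  [seq (p.1 *m B^T, p.2) | p <- fm_all (kernel_basis A) (ineq_list a b)].

Lemma image_systemP y : image y <-> ineq_seq image_system y.
Proof.
have -> : ineq_seq image_system y <->
    ineq_seq (fm_all (kernel_basis A) (ineq_list a b)) (y *m B).
  rewrite /image_system; split => [H p ps|H p /mapP[q qs ->] /=].
    by rewrite dotv_mulmx; apply: (H (p.1 *m B^T, p.2)); apply/mapP; exists p.
  by rewrite -dotv_mulmx; apply: H.
rewrite fm_allP; split.
  move=> [x Px <-]; exists (x - x *m A *m B); split; last by rewrite addrC subrK; apply/ineq_listP.
  by apply/spans_kernel_basisP; rewrite mulmxBl -(mulmxA (x *m A)) BA mulmx1 subrr.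
move=> [w [/spans_kernel_basisP hw /ineq_listP Pw]]; exists (y *m B + w) => //.
by rewrite mulmxDl hw addr0 -mulmxA BA mulmx1.
Qed.

Lemma image_bounded (M : R) : (forall x, ineq_set a b x -> forall j, `|x 0 j| <= M) ->
  forall y, image y -> forall j, `|y 0 j| <= `|M| * mx_abs_sum A.
Proof.
move=> hM y [x Px <-] j; apply: normr_mulmx_le => // i.
exact: le_trans (hM x Px i) (ler_norm _).
Qed.

Lemma image_interior (x0 : 'rV[R]_n) (e : R) : 0 < e ->
  (forall y : 'rV[R]_n, (forall j, `|y 0 j - x0 0 j| < e) -> ineq_set a b y) ->
  forall y : 'rV[R]_m, (forall j, `|y 0 j - (x0 *m A) 0 j| < e / (mx_abs_sum B + 1)) -> image y.
Proof.
move=> e0 hbox y hy; have B0 := mx_abs_sum_ge0 B.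
have eB0 : 0 < e / (mx_abs_sum B + 1) by rewrite divr_gt0 // ltr_wpDl.
exists (x0 + (y - x0 *m A) *m B); last by rewrite mulmxDl -mulmxA BA mulmx1 addrC subrK.
apply: hbox => i; rewrite mxE addrAC subrr add0r.
have hyB j : `|(y - x0 *m A) 0 j| <= e / (mx_abs_sum B + 1).
  by rewrite 2!mxE; exact: ltW (hy j).
apply: le_lt_trans (normr_mulmx_le B (ltW eB0) hyB i) _.
rewrite mulrAC ltr_pdivrMr ?ltr_wpDl // ltr_pM2l //; lra.
Qed.

End LinearImage.

Lemma image_rat_polytope (R : realType) n m (A : 'M[R]_(n, m)) (P : set 'rV[R]_n)
    N (a : 'I_N -> 'rV[R]_n) (b : 'I_N -> R) :
  rat_polytope_desc P a b ->
  (forall i j, A i j \is a Num.int) ->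
  (forall z : 'rV[R]_m, integral_vec z -> exists y : 'rV[R]_n, integral_vec y /\ y *m A = z) ->
  exists NQ (aQ : 'I_NQ -> 'rV[R]_m) (bQ : 'I_NQ -> R),
    rat_polytope_desc ((fun x => x *m A) @` P) aQ bQ.
Proof.
move=> [-> [[M hM] [x0 [e [e0 hbox]]] hprim _ _]] Aint /integral_right_inverse [B [BA Bint]].
set sQ := image_system A B a b.
have -> : (fun x => x *m A) @` ineq_set a b = ineq_set (fun l : 'I_(size sQ) => (nth (0, 0) sQ l).1)
                            (fun l : 'I_(size sQ) => (nth (0, 0) sQ l).2).
  by apply/seteqP; split => y; rewrite -ineq_seq_nth (image_systemP BA).
apply: exists_rat_polytope_desc.
- have ratQ : rational_sys (fm_all (kernel_basis A) (ineq_list a b)).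
    apply: rational_fm_all; first exact: rational_kernel_basis.
    move=> q /mapP[i _ ->] /=; have [[ia _] rb] := hprim i.
    by split => // j; exact: rational_of_int.
  move=> l; have : nth (0, 0) sQ l \in sQ by rewrite mem_nth.
  move=> /mapP[p /ratQ [rp1 rp2] ->] /=; split => //.
  by apply: rational_vec_mulmx => // i j; rewrite mxE; exact: rational_of_int.
- exists (`|M| * mx_abs_sum A) => y; rewrite -ineq_seq_nth -(image_systemP BA).
  exact: image_bounded hM y.
- exists (x0 *m A), (e / (mx_abs_sum B + 1)); split; first by rewrite divr_gt0 ?ltr_wpDl ?mx_abs_sum_ge0.
  by move=> y /(image_interior BA e0 hbox) /(image_systemP BA) /ineq_seq_nth.
Qed.

Definition codeg_set (R : realType) k N (a : 'I_N -> 'rV[R]_k) (b : 'I_N -> R) :=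
  [set s : R | 0 < s /\ level_set a b s !=set0].

Definition tight (R : realType) k N (a : 'I_N -> 'rV[R]_k) (b : 'I_N -> R) i :=
  `[< forall x, core a b x -> dotv (a i) x - b i = (qcodeg a b)^-1 >].

Lemma level_set_sub (R : realType) k N (a : 'I_N -> 'rV[R]_k) (b : 'I_N -> R) (s : R) :
  0 <= s -> level_set a b s `<=` ineq_set a b.
Proof. by move=> s0 x hx i; have := hx i; lra. Qed.

Section Core.
Variables (R : realType) (k N : nat) (a : 'I_N -> 'rV[R]_k) (b : 'I_N -> R).
Variable x0 : 'rV[R]_k.
Hypothesis x0_interior : forall i, b i < dotv (a i) x0.
Hypothesis bounded : exists M : R, forall x, ineq_set a b x -> forall j, `|x 0 j| <= M.
Hypothesis N_gt0 : (0 < N)%N.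

Let slack i x := dotv (a i) x - b i.
Let s_max := (qcodeg a b)^-1.

Lemma min_slack_in_codeg_set : codeg_set a b (\big[Num.min/1]_i slack i x0).
Proof.
split; first by apply: lt_bigmin => // i _; rewrite subr_gt0.
by exists x0 => i; apply: bigmin_le.
Qed.

Lemma has_sup_codeg_set : has_sup (codeg_set a b).
Proof.
split; first by eexists; exact: min_slack_in_codeg_set.
have [M hM] := bounded; pose i0 := Ordinal N_gt0.
exists (M * \sum_j `|a i0 0 j| - b i0) => s [s0 [y hy]].
have := normr_dotv_le (a i0) (hM y (level_set_sub (ltW s0) hy)).
have := hy i0; have := ler_norm (dotv (a i0) y); lra.
Qed.

Lemma qcodegVE : s_max = sup (codeg_set a b).
Proof. exact: invrK. Qed.

Lemma qcodegV_gt0 : 0 < s_max.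
Proof.
rewrite qcodegVE; apply: lt_le_trans (sup_upper_bound has_sup_codeg_set min_slack_in_codeg_set).
by case: min_slack_in_codeg_set.
Qed.

Lemma level_set_le_qcodegV (s : R) x : 0 < s -> level_set a b s x -> s <= s_max.
Proof.
by move=> s0 hx; rewrite qcodegVE; apply: (sup_upper_bound has_sup_codeg_set); split => //; exists x.
Qed.

Lemma core_neq0 : exists c0, core a b c0.
Proof.
have [c0 [Pc0 hc0]] := min_slack_attained bounded
  (ex_intro _ x0 (fun i => ltW (x0_interior i))).
exists c0 => i; rewrite -/s_max qcodegVE; apply: ge_sup.
  by eexists; exact: min_slack_in_codeg_set.
by move=> s [s0 [y hy]]; apply: hc0 (level_set_sub (ltW s0) hy) hy i.
Qed.

Lemma tightP i : tight a b i -> forall x, core a b x -> slack i x = s_max.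
Proof. by move/asboolP. Qed.

Lemma not_tightP i : ~~ tight a b i -> exists x, core a b x /\ s_max < slack i x.
Proof.
move/asboolP => hn; apply: contra_notP hn => nex x hx.
apply/eqP; rewrite eq_le (hx i) andbT leNgt; apply/negP => lt.
by apply: nex; exists x.
Qed.

Lemma tight_orth_direction i : tight a b i ->
  forall v, direction_space (core a b) v -> dotv (a i) v = 0.
Proof.
move=> hi v [M [t [y [z [hyz ->]]]]]; rewrite dotv_sumr big1 // => r _.
have [hy hz] := hyz r; have := tightP hi hy; have := tightP hi hz.
by rewrite /slack dotvZr dotvBr => h1 h2; rewrite [_ - _](_ : _ = 0) ?mulr0 //; lra.
Qed.

(* Average one core point per non-tight facet, chosen strictly inside it. *)
Lemma exists_core_relint :
  exists c, core a b c /\ forall j, ~~ tight a b j -> s_max < slack j c.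
Proof.
have /choice [w hw] j : exists x, core a b x /\ (~~ tight a b j -> s_max < slack j x).
  have [hj|/not_tightP [x [hx1 hx2]]] := boolP (tight a b j); last by exists x.
  by have [c0 hc0] := core_neq0; exists c0.
have N0 : (0 : R) < N%:R by rewrite ltr0n.
pose c := (N%:R)^-1 *: \sum_j w j.
have slack_avg i : slack i c = (N%:R)^-1 * \sum_j slack i (w j).
  rewrite /slack dotvZr dotv_sumr sumrB sumr_const card_ord mulrBr; congr (_ - _).
  by rewrite -(mulr_natr (b i)) mulrCA mulVf ?mulr1 // gt_eqF.
have sN : s_max * N%:R = \sum_(j < N) s_max by rewrite sumr_const card_ord mulr_natr.
exists c; split => [i|j hj].
  change (s_max <= slack i c); rewrite slack_avg mulrC ler_pdivlMr // sN.
  by apply: ler_sum => j _; exact: (proj1 (hw j) i).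
rewrite slack_avg mulrC ltr_pdivlMr // sN (bigD1 j) //= [X in _ < X](bigD1 j) //=.
apply: ltr_leD; first exact: (proj2 (hw j) hj).
by apply: ler_sum => i _; exact: (proj1 (hw i) j).
Qed.

Section RelativeInterior.
Variable c : 'rV[R]_k.
Hypothesis c_core : core a b c.
Hypothesis c_relint : forall j, ~~ tight a b j -> s_max < slack j c.

Lemma slack_shift i v t : slack i (c + t *: v) = slack i c + t * dotv (a i) v.
Proof. by rewrite /slack dotvDr dotvZr; lra. Qed.

Lemma relint_shift v : exists eps, 0 < eps /\
  forall j, ~~ tight a b j -> s_max < slack j (c + eps *: v).
Proof.
have hyp j : ~~ tight a b j -> b j + s_max < dotv (a j) c.
  by move=> /c_relint; rewrite /slack; lra.
have [t [t0 ht]] := strict_ineq_step v hyp.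
by exists t; split => // j hj; have := ht j hj; rewrite /slack; lra.
Qed.

Lemma core_shift v : (forall i, tight a b i -> 0 <= dotv (a i) v) ->
  exists eps, 0 < eps /\ core a b (c + eps *: v).
Proof.
move=> hv; have [eps [eps0 heps]] := relint_shift v; exists eps; split => // i.
change (s_max <= slack i (c + eps *: v)).
have [hi|/heps/ltW //] := boolP (tight a b i).
by rewrite slack_shift (tightP hi c_core) lerDl; apply: mulr_ge0; [exact: ltW | exact: hv].
Qed.

Lemma no_tight_ascent v : ~ (forall i, tight a b i -> 0 < dotv (a i) v).
Proof.
move=> hv; have [eps [eps0 heps]] := relint_shift v.
pose p := c + eps *: v.
have hp i : s_max < slack i p.
  have [hi|/heps //] := boolP (tight a b i).
  by rewrite /p slack_shift (tightP hi c_core) ltrDl; apply: mulr_gt0 => //; exact: hv.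
set s := \big[Num.min/(s_max + 1)]_i slack i p.
have hs : s_max < s by apply: lt_bigmin => [|i _]; rewrite ?ltrDl.
have : s <= s_max.
  apply: (level_set_le_qcodegV (x := p)); first exact: lt_trans qcodegV_gt0 hs.
  by move=> i; apply: bigmin_le.
by rewrite leNgt hs.
Qed.

Lemma exists_tight : exists i, tight a b i.
Proof.
have [//|nex] := pselect (exists i, tight a b i).
by case: (no_tight_ascent (v := 0)) => i hi; case: nex; exists i.
Qed.

Lemma tight_ge0_eq0 v : (forall i, tight a b i -> 0 <= dotv (a i) v) ->
  forall i, tight a b i -> dotv (a i) v = 0.
Proof.
move=> hv i hi; have [eps [eps0 heps]] := core_shift hv.
have := tightP hi heps; rewrite slack_shift (tightP hi c_core) => h.
have /eqP : eps * dotv (a i) v = 0 by lra.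
by rewrite mulf_eq0 (gt_eqF eps0) => /eqP.
Qed.

Lemma direction_space_coreP v :
  direction_space (core a b) v <-> forall i, tight a b i -> dotv (a i) v = 0.
Proof.
split => [hv i hi|hv]; first exact: tight_orth_direction.
have [eps [eps0 heps]] : exists eps, 0 < eps /\ core a b (c + eps *: v).
  by apply: core_shift => i hi; rewrite hv.
exists 1%N, (fun=> eps^-1), (fun=> c + eps *: v), (fun=> c); split; first by [].
by rewrite big_ord1 addrAC subrr add0r scalerA mulVf ?scale1r // gt_eqF.
Qed.

End RelativeInterior.
End Core.

Section ImageCodegree.
Variables (R : realType) (n m : nat) (A : 'M[R]_(n, m)) (B : 'M[R]_(m, n)).
Hypothesis BA : B *m A = 1%:M.
Hypothesis B_int : forall i j, B i j \is a Num.int.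
Variables (N : nat) (a : 'I_N -> 'rV[R]_n) (b : 'I_N -> R).
Hypothesis kerA : forall x, x *m A = 0 <-> direction_space (core a b) x.

Lemma tight_dotv_factor i : tight a b i ->
  forall x, dotv (a i) x = dotv (a i *m B^T) (x *m A).
Proof.
move=> hi x; rewrite -dotv_mulmx.
have /kerA/(tight_orth_direction hi) : (x - x *m A *m B) *m A = 0.
  by rewrite mulmxBl -(mulmxA (x *m A)) BA mulmx1 subrr.
by rewrite dotvBr => /eqP; rewrite subr_eq0 => /eqP.
Qed.

Lemma facet_image_nbhd i w : dotv (a i) w = b i ->
  (forall l, l != i -> b l < dotv (a l) w) ->
  exists eta, 0 < eta /\ forall h : 'rV[R]_m, dotv (a i *m B^T) h = 0 ->
    (forall k, `|h 0 k| <= eta) -> ((fun x => x *m A) @` ineq_set a b) (w *m A + h).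
Proof.
move=> wi /strict_ineq_box [eta [eta0 box]].
have etaB0 : 0 < eta / (mx_abs_sum B + 1) by rewrite divr_gt0 // ltr_wpDl // mx_abs_sum_ge0.
exists (eta / (mx_abs_sum B + 1)); split => // h uh hh.
exists (w + h *m B); last by rewrite mulmxDl -mulmxA BA mulmx1.
move=> l; have [->|hl] := eqVneq l i; first by rewrite dotvDr wi dotv_mulmx uh addr0.
apply/ltW/(box _ _ l hl) => k; apply: le_trans (normr_mulmx_le B (ltW etaB0) hh k) _.
by rewrite mulrAC ler_pdivrMr ?ltr_wpDl ?mx_abs_sum_ge0 // ler_pM2l // lerDl.
Qed.

Variable x0 : 'rV[R]_n.
Hypothesis x0_interior : forall i, b i < dotv (a i) x0.
Hypothesis bounded : exists M : R, forall x, ineq_set a b x -> forall j, `|x 0 j| <= M.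
Hypothesis N_gt0 : (0 < N)%N.
Hypothesis irredundant : forall i, drop_ineq a b i <> ineq_set a b.
Hypothesis a_prim : forall i, primitive_vec (a i).

Variables (NQ : nat) (aQ : 'I_NQ -> 'rV[R]_m) (bQ : 'I_NQ -> R).
Hypothesis Q_desc : rat_polytope_desc ((fun x => x *m A) @` ineq_set a b) aQ bQ.

(* The image of the facet of a tight inequality is a facet of the image: near
   the image of a relative interior point, the image fills the hyperplane
   u^⊥, so the facet normal there is a multiple of u. *)
Lemma tight_image_facet i : tight a b i -> exists j lam,
  [/\ 0 < lam <= 1, aQ j = lam *: (a i *m B^T) & bQ j = lam * b i].
Proof.
move=> hi; have factor := tight_dotv_factor hi; set u := a i *m B^T in factor *.
case: Q_desc => hQ [_ [y0 [eQ [eQ0 hboxQ]]] hprimQ _ _].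
have [w [wi wl]] := facet_relint x0_interior (@irredundant i).
have uw : dotv u (w *m A) = b i by rewrite -factor.
have un0 : u != 0.
  apply: contra (primitive_vec_neq0 (a_prim i)) => /eqP u0.
  by apply/eqP/dotv_self_eq0; rewrite factor u0 dotv0l.
have [etaQ [etaQ0 nbhdP]] := facet_image_nbhd wi wl.
have nbhd (h : 'rV[R]_m) : dotv u h = 0 -> (forall k, `|h 0 k| <= etaQ) ->
    ineq_set aQ bQ (w *m A + h).
  by rewrite -hQ; exact: nbhdP.
have [j hj] : exists j, dotv (aQ j) (w *m A) = bQ j.
  have [//|nex] := pselect (exists j, dotv (aQ j) (w *m A) = bQ j).
  have wQ : ineq_set aQ bQ (w *m A).
    rewrite -[w *m A]addr0; apply: nbhd; first exact: dotv0r.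
    by move=> k; rewrite mxE normr0 ltW.
  have strict j : bQ j < dotv (aQ j) (w *m A).
    rewrite lt_neqAle wQ andbT; apply/eqP => e; apply: nex; exists j.
    by rewrite e.
  have [t [t0 ht]] := strict_ineq_step (p := predT) (- u) (fun j _ => strict j).
  have : ((fun x => x *m A) @` ineq_set a b) (w *m A + t *: - u).
    by rewrite hQ => l; exact: ltW (ht l isT).
  case=> x Px hx; have := Px i; rewrite factor hx dotvDr uw dotvZr dotvNr mulrN.
  by have := mulr_gt0 t0 (dotv_self_gt0 un0); lra.
have orth (h : 'rV[R]_m) : dotv u h = 0 -> dotv (aQ j) h = 0.
  apply: (local_ge0_orth etaQ0) => {}h uh hh.
  by have := nbhd h uh hh j; rewrite dotvDr hj lerDl.
set lam := dotv (aQ j) u / dotv u u.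
have aQj : aQ j = lam *: u by exact: dotv_orth_parallel.
have bQj : bQ j = lam * b i by rewrite -hj aQj dotvZl uw.
have lam_gt0 : 0 < lam.
  have : ineq_set aQ bQ (x0 *m A) by rewrite -hQ; exists x0 => // l; exact: ltW.
  move=> /(_ j); rewrite aQj bQj dotvZl -factor -subr_ge0 -mulrBr.
  rewrite pmulr_lge0 ?subr_gt0 // le_eqVlt => /orP[/eqP l0|//].
  by have := primitive_vec_neq0 (proj1 (hprimQ j)); rewrite aQj -l0 scale0r eqxx.
exists j, lam; split => //; rewrite lam_gt0 /=.
apply: (primitive_vec_scale_le1 (u := u)) lam_gt0 _; last by rewrite -aQj; case: (hprimQ j).
move=> k; rewrite mxE; apply: rpred_sum => l _; rewrite mxE.
by apply: rpredM; [case: (a_prim i) => + _; apply | exact: B_int].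
Qed.

Lemma image_level_set_le i (s : R) (y : 'rV[R]_m) : tight a b i -> 0 < s ->
  level_set aQ bQ s y -> s <= dotv (a i *m B^T) y - b i.
Proof.
move=> hi s0 hy; have [j [lam [/andP[l0 l1] aQj bQj]]] := tight_image_facet hi.
case: Q_desc => hQ _.
have : ((fun x => x *m A) @` ineq_set a b) y by rewrite hQ; exact: (level_set_sub (ltW s0) hy).
case=> x Px xy; rewrite -xy in hy *.
have := hy j; rewrite aQj bQj dotvZl -mulrBr -tight_dotv_factor // => hs.
have hx : 0 <= dotv (a i) x - b i by rewrite subr_ge0; exact: Px.
by have := ler_piMl hx l1; lra.
Qed.

Section ImageOfCore.
Variable c : 'rV[R]_n.
Hypothesis c_core : core a b c.
Hypothesis c_relint : forall j, ~~ tight a b j -> (qcodeg a b)^-1 < dotv (a j) c - b j.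

Lemma image_codeg_set_le s : codeg_set aQ bQ s -> s <= (qcodeg a b)^-1.
Proof.
move=> [s0 [y hy]]; rewrite leNgt; apply/negP => hlt.
apply: (no_tight_ascent x0_interior bounded N_gt0 c_core c_relint (v := y *m B - c)) => i hi.
rewrite dotvBr (tight_dotv_factor hi) -mulmxA BA mulmx1.
by have := tightP hi c_core; have := image_level_set_le hi s0 hy; lra.
Qed.

Lemma image_level_set_max y : level_set aQ bQ (qcodeg a b)^-1 y -> y = c *m A.
Proof.
move=> hy; have s_pos := qcodegV_gt0 x0_interior bounded N_gt0.
have hv i : tight a b i -> 0 <= dotv (a i) (y *m B - c).
  move=> hi; rewrite dotvBr (tight_dotv_factor hi) -mulmxA BA mulmx1.
  by have := tightP hi c_core; have := image_level_set_le hi s_pos hy; lra.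
have /kerA : direction_space (core a b) (y *m B - c).
  exact/(direction_space_coreP c_core c_relint)/(tight_ge0_eq0 c_core c_relint).
by rewrite mulmxBl -mulmxA BA mulmx1 => /eqP; rewrite subr_eq0 => /eqP.
Qed.

Lemma image_core : (fun x => x *m A) @` core a b = [set c *m A].
Proof.
apply/seteqP; split => y /=; last by move->; exists c.
case=> x hx <-; have /kerA : direction_space (core a b) (x - c).
  by exists 1%N, (fun=> 1), (fun=> x), (fun=> c); split => //; rewrite big_ord1 scale1r.
by rewrite mulmxBl => /eqP; rewrite subr_eq0 => /eqP.
Qed.

End ImageOfCore.

End ImageCodegree.

Lemma image_qcodeg (R : realType) n m (A : 'M[R]_(n, m)) (P : set 'rV[R]_n)
    N (a : 'I_N -> 'rV[R]_n) (b : 'I_N -> R) :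
  rat_polytope_desc P a b -> (0 < N)%N ->
  (forall x, x *m A = 0 <-> direction_space (core a b) x) ->
  (forall z : 'rV[R]_m, integral_vec z -> exists y : 'rV[R]_n, integral_vec y /\ y *m A = z) ->
  forall NQ (aQ : 'I_NQ -> 'rV[R]_m) (bQ : 'I_NQ -> R),
    rat_polytope_desc ((fun x => x *m A) @` P) aQ bQ ->
    qcodeg a b <= qcodeg aQ bQ /\
    (qcodeg aQ bQ = qcodeg a b -> exists c,
       core aQ bQ = [set c] /\ (fun x => x *m A) @` core a b = [set c]).
Proof.
move=> descP N0 kerA /integral_right_inverse [B [BA Bint]] NQ aQ bQ descQ.
case: (descP) => hP [bnd [x0 [e [e0 hbox]]] hprim irr _]; subst P.
have a_prim i := proj1 (hprim i).
have x0_int i : b i < dotv (a i) x0.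
  by have := interior_strict e0 hbox (primitive_vec_neq0 (a_prim i)).
have [c [c_core c_relint]] := exists_core_relint x0_int bnd N0.
have [i0 hi0] := exists_tight x0_int bnd N0 c_core c_relint.
have [j0 _] := tight_image_facet BA Bint kerA x0_int irr a_prim descQ hi0.
case: (descQ) => hQ [bndQ [y0 [eQ [eQ0 hboxQ]]] hprimQ _ _].
rewrite hQ in bndQ hboxQ.
have y0_int j : bQ j < dotv (aQ j) y0.
  by have := interior_strict eQ0 hboxQ (primitive_vec_neq0 (proj1 (hprimQ j))).
have NQ0 : (0 < NQ)%N := leq_ltn_trans (leq0n j0) (ltn_ord j0).
have s_le : (qcodeg aQ bQ)^-1 <= (qcodeg a b)^-1.
  rewrite qcodegVE; apply: ge_sup; first by eexists; exact: min_slack_in_codeg_set y0_int.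
  by move=> s /(image_codeg_set_le BA Bint kerA x0_int bnd N0 irr a_prim descQ c_core c_relint).
split.
  rewrite -[qcodeg a b]invrK -[qcodeg aQ bQ]invrK lef_pV2 ?posrE //.
    exact: qcodegV_gt0 x0_int bnd N0.
  exact: qcodegV_gt0 y0_int bndQ NQ0.
move=> eq_qcodeg; exists (c *m A); split; last by have := image_core kerA c_core.
have hmax y : core aQ bQ y -> y = c *m A.
  rewrite /core eq_qcodeg => hy.
  by have := image_level_set_max BA Bint kerA x0_int bnd N0 irr a_prim descQ c_core c_relint hy.
apply/seteqP; split => [y /hmax //|_ ->].
by have [y hy] := core_neq0 y0_int bndQ; rewrite -(hmax y hy).
Qed.

Lemma qcodeg_ge0 (R : realType) k N (a : 'I_N -> 'rV[R]_k) (b : 'I_N -> R) :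
  0 <= qcodeg a b.
Proof.
rewrite /qcodeg invr_ge0 -/(codeg_set a b).
have [hs|] := pselect (has_sup (codeg_set a b)); last by move=> ?; rewrite sup_out.
have [[s hsS] _] := hs; apply: le_trans (sup_upper_bound hs hsS).
by case: hsS => /ltW.
Qed.

(* With no inequalities every level set is the whole space, so [codeg_set] is
   unbounded and [sup] returns its junk value 0. *)
Lemma qcodeg_no_ineq (R : realType) k (a : 'I_0 -> 'rV[R]_k) (b : 'I_0 -> R) :
  qcodeg a b = 0.
Proof.
rewrite /qcodeg sup_out ?invr0 // => -[_ [M hM]].
have : Num.max M 0 + 1 <= M.
  by apply: hM; split; [rewrite ltr_wpDl // le_max lexx orbT | exists 0 => -[]].
have : M <= Num.max M 0 by rewrite le_max lexx.
lra.
Qed.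

Lemma no_ineq_bounded_dim0 (R : realType) n (a : 'I_0 -> 'rV[R]_n) (b : 'I_0 -> R) :
  (exists M : R, forall x, ineq_set a b x -> forall j, `|x 0 j| <= M) -> n = 0%N.
Proof.
case: n a => // n a [M hM].
have /(_ ord0) : forall j, `|(const_mx (`|M| + 1) : 'rV[R]_n.+1) 0 j| <= M.
  by apply: hM => -[].
rewrite mxE => h; exfalso.
have : `|(`|M| + 1)| = `|M| + 1 by apply: ger0_norm; rewrite addr_ge0.
have := ler_norm M; lra.
Qed.

Lemma image_qcodeg_no_ineq (R : realType) n m (A : 'M[R]_(n, m)) (P : set 'rV[R]_n)
    (a : 'I_0 -> 'rV[R]_n) (b : 'I_0 -> R) :
  rat_polytope_desc P a b ->
  forall NQ (aQ : 'I_NQ -> 'rV[R]_m) (bQ : 'I_NQ -> R),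
    rat_polytope_desc ((fun x => x *m A) @` P) aQ bQ ->
    qcodeg a b <= qcodeg aQ bQ /\
    (qcodeg aQ bQ = qcodeg a b -> exists c,
       core aQ bQ = [set c] /\ (fun x => x *m A) @` core a b = [set c]).
Proof.
move=> [hP [bnd [x0 _] _ _ _]] NQ aQ bQ [hQ _]; subst P.
rewrite qcodeg_no_ineq; split => [|hq0]; first exact: qcodeg_ge0.
have n0 := no_ineq_bounded_dim0 bnd; subst n.
have xA0 (x : 'rV[R]_0) : x *m A = 0 by rewrite thinmx0 mul0mx.
have coreQ : core aQ bQ = ineq_set aQ bQ.
  rewrite /core hq0 invr0; apply/seteqP; split => y hy i; have := hy i; lra.
exists 0; split; apply/seteqP; split => y /=.
- by rewrite coreQ -hQ => -[x _ <-].
- by move=> ->; rewrite coreQ -hQ; exists x0 => // -[].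
- by move=> [x _ <-].
- by move=> ->; exists 0 => // -[].
Qed.

Unset Implicit Arguments.
Set Strict Implicit.

Theorem proposition2p3 (R : realType) (n : nat) (P : set 'rV[R]_n)
  (N : nat) (a : 'I_N -> 'rV[R]_n) (b : 'I_N -> R) :
  rat_polytope_desc P a b ->
  forall (m : nat) (A : 'M[R]_(n, m)),
    (forall x : 'rV[R]_n, x *m A = 0 <-> direction_space (core a b) x) ->
    (forall i j, A i j \is a Num.int) ->
    (forall z : 'rV[R]_m, integral_vec z ->
       exists y : 'rV[R]_n, integral_vec y /\ y *m A = z) ->
  let Q := (fun x => x *m A) @` P in
  (exists (NQ : nat) (aQ : 'I_NQ -> 'rV[R]_m) (bQ : 'I_NQ -> R),
      rat_polytope_desc Q aQ bQ) /\
  (forall (NQ : nat) (aQ : 'I_NQ -> 'rV[R]_m) (bQ : 'I_NQ -> R),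
      rat_polytope_desc Q aQ bQ ->
      qcodeg a b <= qcodeg aQ bQ /\
      (qcodeg aQ bQ = qcodeg a b ->
         exists c : 'rV[R]_m,
           core aQ bQ = [set c] /\ (fun x => x *m A) @` core a b = [set c])).
Proof.
move=> descP m A kerA A_int A_surj Q.
split; first exact: image_rat_polytope descP A_int A_surj.
have [N0|N_gt0] := posnP N; last exact: image_qcodeg descP N_gt0 kerA A_surj.
by subst N; exact: image_qcodeg_no_ineq descP.
Qed.
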